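(* In the standard LLP setup, suppose $K=\overline{K}$ and there is no starting error in $L(G,\gamma^N_{cons})$ (i.e. $f^N_{cons}(\epsilon)\neq\emptyset$). If $N_u(K)$ is defined and $N\ge N_u(K)+2$, then $L(G,\gamma^N_{cons})=\overline{K^\uparrow}$.
   Context: Standard LLP setup. $\Sigma=\Sigma_c\,\dot\cup\,\Sigma_{uc}$ is a finite alphabet partitioned into controllable and uncontrollable events. The plant $G$ has generated language $L(G)$ and marked language $L_m(G)$ with $L(G)=\overline{L_m(G)}$ ($\overline{M}$ = set of prefixes of strings in $M$). The legal language $K\subseteq L_m(G)$ satisfies $K=\overline{K}\cap L_m(G)$. For a prefix-closed $L$, $M$ is controllable w.r.t. $L$ if $\overline{M}\Sigma_{uc}\cap L\subseteq\overline{M}$; $K^\uparrow$ is the supremal sublanguage of $K$ controllable w.r.t. $L(G)$. For a language $L$ and $s\in\Sigma^*$: $L/s=\{t: st\in L\}$; $L|_N=\{t\in L:|t|\le N\}$; $\Sigma_{L(G)}(s)=\{\sigma\in\Sigma: s\sigma\in L(G)\}$. $M^{\uparrow/s|_N}$ is the supremal sublanguage of $M$ controllable w.r.t. $L(G)/s|_N$. Conservative attitude: $f^N_{cons}(s)=[K/s|_{N-1}]^{\uparrow/s|_N}$; control policy $\gamma^N_{cons}(s)=(\overline{f^N_{cons}(s)}\cap\Sigma)\cup(\Sigma_{uc}\cap\Sigma_{L(G)}(s))$. Closed-loop language $L(G,\gamma)$: $\epsilon\in L(G,\gamma)$, and $s\sigma\in L(G,\gamma)$ iff $s\in L(G,\gamma)$,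 $s\sigma\in L(G)$, $\sigma\in\gamma(s)$. For a language $L$, $N_u(L)=\max\{|t|: t\in\Sigma_{uc}^*,\ \exists u,v\in\Sigma^*,\ utv\in L\}$ if this maximum exists; otherwise undefined. *)

From mathcomp Require Import all_boot.
Set Implicit Arguments. Unset Strict Implicit. Unset Printing Implicit Defensive.

Section Lang.
Variable A : finType.

Definition lang := seq A -> Prop.

Definition lsub (M L : lang) : Prop := forall s, M s -> L s.

Definition pref (M : lang) : lang := fun s => exists t, M (s ++ t).

Definition controllable (uc : pred A) (M L : lang) : Prop :=
  forall s a, pref M s -> uc a -> L (rcons s a) -> pref M (rcons s a).

Definition supC (uc : pred A) (M L : lang) : lang :=
  fun s => exists M' : lang, [/\ lsub M' M, controllable uc M' L & M' s].

Definition quot (L : lang) (s : seq A) : lang := fun t => L (s ++ t).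

Definition trunc (L : lang) (N : nat) : lang := fun t => L t /\ size t <= N.

Definition f_cons (uc : pred A) (LG K : lang) (N : nat) (s : seq A) : lang :=
  supC uc (trunc (quot K s) N.-1) (trunc (quot LG s) N).

Definition gamma_cons (uc : pred A) (LG K : lang) (N : nat) (s : seq A) (a : A)
  : Prop :=
  pref (f_cons uc LG K N s) [:: a] \/ (uc a /\ LG (rcons s a)).

Inductive closed_loop (LG : lang) (gamma : seq A -> A -> Prop) : lang :=
| cl_nil : closed_loop LG gamma [::]
| cl_step s a : closed_loop LG gamma s -> LG (rcons s a) -> gamma s a ->
    closed_loop LG gamma (rcons s a).

(* "N_u(L) is defined and equals n": n is the maximum length of a string of
   uncontrollable events occurring as a substring of a string of L *)
Definition Nu_is (uc : pred A) (L : lang) (n : nat) : Prop :=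
  (exists t u v, [/\ all uc t, size t = n & L (u ++ t ++ v)]) /\
  (forall t u v, all uc t -> L (u ++ t ++ v) -> size t <= n).

End Lang.

From mathcomp Require Import all_boot.
From mathcomp Require Import zify.
Set Implicit Arguments. Unset Strict Implicit. Unset Printing Implicit Defensive.

(* Proof strategy.  Both inclusions are proved separately; only the second
   one uses the bound N >= N_u(K) + 2.

   Call a
   string x "uc-safe" when x is legal and every plant-feasible
   uncontrollable continuation of every prefix of x stays legal.  The
   uc-safe strings form a controllable sublanguage of K, hence lie below
   K^up.  Every closed-loop string is uc-safe: uncontrollable steps
   preserve uc-safety by definition, and a controllable step enabled by
   f_cons(s) is legal and safe because the look-ahead language f_cons(s),
   being controllable within the window of length N, is closed under
   plant-feasible uncontrollable extensions.

   If s a is a prefix of a controllable sublanguage M of K,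
   then the look-ahead window "t is a prefix of M after s, |t| <= N-1, and
   t is uncontrollable after its first event" is controllable within the
   window of length N (its strings have length at most N_u(K) + 1), so it
   is part of f_cons(s) and enables a; induction on s concludes. *)

Section Languages.
Variable A : finType.
Implicit Types (L M : lang A) (s t x y z u w : seq A).

Definition prefix_closed L : Prop := forall x w, L (x ++ w) -> L x.

Lemma pref_prefix_closed M : prefix_closed (pref M).
Proof. by move=> x w [v Mv]; exists (w ++ v); rewrite catA. Qed.

Lemma sub_pref M : lsub M (pref M).
Proof. by move=> x Mx; exists [::]; rewrite cats0. Qed.

Lemma pref_sub_closed L M x : prefix_closed L -> lsub M L -> pref M x -> L x.
Proof. by move=> L_closed ML [w /ML /L_closed]. Qed.

Lemma prefix_closed_quot L s : prefix_closed L -> prefix_closed (quot L s).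
Proof. by move=> L_closed x w; rewrite /quot catA; apply: L_closed. Qed.

Lemma rcons_eq_cat x b y z :
  rcons x b = y ++ z -> y = rcons x b \/ exists z', x = y ++ z'.
Proof.
case/lastP: z => [|z c]; first by rewrite cats0; left.
by rewrite -rcons_cat => /rcons_inj [-> _]; right; exists z.
Qed.

Variable uc : pred A.

Lemma pref_supC_intro M L M' s :
  lsub M' M -> controllable uc M' L -> pref M' s -> pref (supC uc M L) s.
Proof. by move=> M'M M'ctrl [w M'w]; exists w, M'. Qed.

Lemma pref_supC_elim M L s :
  pref (supC uc M L) s ->
  exists M', [/\ lsub M' M, controllable uc M' L & pref M' s].
Proof. by case=> w [M' [M'M M'ctrl M'w]]; exists M'; split => //; exists w. Qed.

Lemma controllable_uc_ext L M x u :
  prefix_closed L -> controllable uc M L ->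
  pref M x -> all uc u -> L (x ++ u) -> pref M (x ++ u).
Proof.
move=> L_closed Mctrl Mx; elim/last_ind: u => [|u b IH]; first by rewrite cats0.
rewrite all_rcons => /andP [ucb ucu]; rewrite -rcons_cat => Lxub.
apply: Mctrl => //; apply: IH => //.
by apply: (L_closed _ [:: b]); rewrite cats1.
Qed.

Lemma controllable_untrunc m L' L M :
  lsub M (trunc L' m) -> controllable uc M (trunc L m.+1) ->
  controllable uc M L.
Proof.
move=> ML' Mctrl x b Mx ucb Lxb; apply: Mctrl => //; split => //.
case: Mx => w /ML' [_]; rewrite size_rcons size_cat; lia.
Qed.

Section ClosedLoop.
Variables (LG K : lang A) (N : nat).
Hypotheses (LG_closed : prefix_closed LG) (K_closed : prefix_closed K).
Hypothesis K_LG : lsub K LG.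

Local Notation f := (f_cons uc LG K N).
Local Notation gamma := (gamma_cons uc LG K N).

Lemma f_cons_legal s t : pref (f s) t -> K (s ++ t).
Proof.
case/pref_supC_elim => M [MK _ [w /MK [Kw _]]].
by apply: (@K_closed _ w); rewrite -catA.
Qed.

Section Soundness.
Hypothesis N_pos : 0 < N.

Lemma f_cons_uc_ext s t u :
  pref (f s) t -> all uc u -> LG (s ++ t ++ u) -> pref (f s) (t ++ u).
Proof.
case/pref_supC_elim => M [MK Mctrl Mt] ucu LGstu.
have Mctrl' : controllable uc M (quot LG s).
  by apply: (controllable_untrunc MK); rewrite prednK.
apply: (pref_supC_intro MK Mctrl).
have quot_closed := prefix_closed_quot (s := s) LG_closed.
exact: controllable_uc_ext quot_closed Mctrl' Mt ucu LGstu.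
Qed.

Definition uc_safe x : Prop :=
  K x /\ forall y z u, x = y ++ z -> all uc u -> LG (y ++ u) -> K (y ++ u).

Lemma uc_safe_prefix_closed : prefix_closed uc_safe.
Proof.
move=> x w [Kxw safe]; split; first exact: K_closed Kxw.
by move=> y z u x_yz; apply: (safe y (z ++ w)); rewrite x_yz catA.
Qed.

Lemma uc_safe_uc_step x b :
  uc_safe x -> uc b -> LG (rcons x b) -> uc_safe (rcons x b).
Proof.
move=> [Kx safe] ucb LGxb; split.
  by rewrite -cats1; apply: (safe x [::]); rewrite ?cats0 ?cats1 //= ucb.
move=> y z u /rcons_eq_cat [->|[z' x_yz']]; last exact: safe x_yz'.
rewrite !cat_rcons => ucu LGxbu.
by apply: (safe x [::]); rewrite ?cats0 //= ucb.
Qed.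

Lemma uc_safe_controllable : controllable uc uc_safe LG.
Proof.
move=> x b [w /uc_safe_prefix_closed safe_x] ucb LGxb.
exact/sub_pref/uc_safe_uc_step.
Qed.

Lemma uc_safe_sub_supC x : uc_safe x -> pref (supC uc K LG) x.
Proof.
move=> safe_x; apply: (pref_supC_intro _ uc_safe_controllable (sub_pref safe_x)).
by move=> y [].
Qed.

Lemma uc_safe_nil : (exists t, f [::] t) -> uc_safe [::].
Proof.
case=> t ft; have f_nil : pref (f [::]) [::] by exists t.
split; first exact: (f_cons_legal f_nil).
case=> // z u _ ucu LGu.
exact: (f_cons_legal (f_cons_uc_ext f_nil ucu LGu)).
Qed.

Lemma uc_safe_ctrl_step s a :
  uc_safe s -> pref (f s) [:: a] -> uc_safe (rcons s a).
Proof.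
move=> [_ safe] fa; split; first by rewrite -cats1; exact: f_cons_legal.
move=> y z u /rcons_eq_cat [->|[z' x_yz']]; last exact: safe x_yz'.
rewrite cat_rcons => ucu LGsau.
exact: (f_cons_legal (f_cons_uc_ext fa ucu LGsau)).
Qed.

Lemma closed_loop_uc_safe s :
  (exists t, f [::] t) -> closed_loop LG gamma s -> uc_safe s.
Proof.
move=> nonblock; elim => [|x a _ safe_x LGxa [fa | [uca _]]].
- exact: uc_safe_nil.
- exact: uc_safe_ctrl_step.
- exact: uc_safe_uc_step.
Qed.

End Soundness.

Section Completeness.
Variable n : nat.
Hypothesis Nu_bound : forall t u v, all uc t -> K (u ++ t ++ v) -> size t <= n.
Hypothesis N_large : n + 2 <= N.

Lemma size_behead_uc s t : K (s ++ t) -> all uc (behead t) -> size t <= n.+1.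
Proof.
case: t => // c t Kst uct.
by apply: (Nu_bound (u := rcons s c) (v := [::])); rewrite // cats0 cat_rcons.
Qed.

Lemma all_behead_cat x w : all uc (behead (x ++ w)) -> all uc (behead x).
Proof. by case: x => //= c x; rewrite all_cat => /andP []. Qed.

Lemma all_behead_rcons x b :
  all uc (behead x) -> uc b -> all uc (behead (rcons x b)).
Proof. by case: x => //= c x ucx ucb; rewrite all_rcons ucx ucb. Qed.

Definition lookahead_window M s : lang A :=
  fun t => [/\ pref M (s ++ t), size t <= N.-1 & all uc (behead t)].

Lemma lookahead_window_controllable M s :
  lsub M K -> controllable uc M LG ->
  controllable uc (lookahead_window M s) (trunc (quot LG s) N).
Proof.
move=> MK Mctrl x b [w [Msxw _ ucxw]] ucb [LGsxb _].
have Msx : pref M (s ++ x).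
  by apply: (pref_prefix_closed (w := w)); rewrite -catA.
have Msxb : pref M (s ++ rcons x b).
  by rewrite -rcons_cat; apply: Mctrl; rewrite ?rcons_cat.
have ucxb := all_behead_rcons (all_behead_cat ucxw) ucb.
have size_xb := size_behead_uc (pref_sub_closed K_closed MK Msxb) ucxb.
by apply: sub_pref; split => //; lia.
Qed.

Lemma supC_enabled M s a :
  lsub M K -> controllable uc M LG -> pref M (rcons s a) -> pref (f s) [:: a].
Proof.
move=> MK Mctrl Msa.
apply: (pref_supC_intro _ (lookahead_window_controllable MK Mctrl)).
  by move=> t [Mst size_t _]; split => //; exact: pref_sub_closed Mst.
by apply: sub_pref; split; rewrite ?cats1 //=; lia.
Qed.

Lemma supC_closed_loop s : pref (supC uc K LG) s -> closed_loop LG gamma s.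
Proof.
case/pref_supC_elim => M [MK Mctrl]; elim/last_ind: s => [|s a IH] Msa.
  exact: cl_nil.
apply: cl_step.
- by apply: IH; apply: (pref_prefix_closed (w := [:: a])); rewrite cats1.
- exact/K_LG/(pref_sub_closed K_closed MK).
- by left; exact: supC_enabled Msa.
Qed.

End Completeness.
End ClosedLoop.
End Languages.

Theorem theorem10 (A : finType) (uc : pred A) (LG LmG K : lang A) (N : nat) :
  (forall s, LG s <-> pref LmG s) ->
  lsub K LmG ->
  (forall s, K s <-> pref K s /\ LmG s) ->
  (forall s, K s <-> pref K s) ->
  (exists t, f_cons uc LG K N [::] t) ->
  (exists n, Nu_is uc K n /\ n + 2 <= N) ->
  forall s, closed_loop LG (gamma_cons uc LG K N) s <-> pref (supC uc K LG) s.
Proof.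
move=> LG_pref K_LmG _ K_pref nonblock [n [[_ Nu_bound] N_large]] s.
have LG_closed : prefix_closed LG.
  by move=> x w /LG_pref /pref_prefix_closed Lx; apply/LG_pref.
have K_closed : prefix_closed K.
  by move=> x w /K_pref /pref_prefix_closed Kx; apply/K_pref.
have K_LG : lsub K LG by move=> x /K_LmG /sub_pref /LG_pref.
have N_pos : 0 < N by lia.
split.
- by move=> cl_s; apply: uc_safe_sub_supC; last exact: closed_loop_uc_safe cl_s.
- exact: supC_closed_loop Nu_bound N_large s.
Qed.
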